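(* For all integers $n,k\ge1$, $$\frac{L_1(k)}{n^k}<\sum_{t=k}^\infty\frac{g_{e,1}(t)}{n^t}<\frac{U_1(k)}{n^k},$$ where $L_1(k)=\left(\cosh\alpha-\frac{6\alpha\sinh\alpha}{5\sqrt{k+1}}-\frac{3}{10(k+1)^{3/2}}\right)24^{-k}$ and $U_1(k)=\left(\frac{24\cosh\alpha}{23}-\frac{\alpha\sinh\alpha}{2\sqrt{k+1}}+\frac{5}{4(k+1)^{3/2}}\right)24^{-k}$.
   Context: $\alpha=\pi/6$. $(a)_m=a(a+1)\cdots(a+m-1)$ is the rising factorial ($(a)_0=1$). For $t\ge0$, $$S_1(t)=\sum_{s=1}^t\frac{(-1)^s(1/2-s)_{s+1}}{s}\sum_{u=1}^s\frac{(-1)^u(-s)_u}{(s+u)!\,(2u-1)!}\left(\frac{\pi^2}{36}\right)^u,\qquad g_{e,1}(t)=\frac{1+S_1(t)}{24^t}.$$ *)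

From Stdlib Require Import Reals.
From Coquelicot Require Import Coquelicot.
Open Scope R_scope.

Definition alpha : R := PI / 6.

Fixpoint rising (a : R) (m : nat) : R :=
  match m with
  | O => 1
  | S m' => rising a m' * (a + INR m')
  end.

Fixpoint sum1 (f : nat -> R) (t : nat) : R :=
  match t with
  | O => 0
  | S t' => sum1 f t' + f t
  end.

Definition S1 (t : nat) : R :=
  sum1 (fun s =>
    (-1) ^ s * rising (1/2 - INR s) (s + 1) / INR s *
    sum1 (fun u =>
      (-1) ^ u * rising (- INR s) u / (INR (Factorial.fact (s + u)) * INR (Factorial.fact (2 * u - 1)))
      * (PI ^ 2 / 36) ^ u) s) t.

Definition g_e1 (t : nat) : R := (1 + S1 t) / 24 ^ t.

Definition L1 (k : nat) : R :=
  (cosh alpha - 6 * alpha * sinh alpha / (5 * sqrt (INR k + 1))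
   - 3 / (10 * Rpower (INR k + 1) (3 / 2))) / 24 ^ k.

Definition U1 (k : nat) : R :=
  (24 * cosh alpha / 23 - alpha * sinh alpha / (2 * sqrt (INR k + 1))
   + 5 / (4 * Rpower (INR k + 1) (3 / 2))) / 24 ^ k.

From Stdlib Require Import Reals Lra Lia Psatz Factorial.
From Coquelicot Require Import Coquelicot.
Open Scope R_scope.

(* Writing the rising factorials as factorials, the inner sum of [S1 t] becomes a
   difference of the normalised upper half-row sums
   [central_mass u t = 4^-t * sum_(m=1..u) C(2t+1, t+m)], and exchanging the two
   summations gives [S1 t = sum_(u=1..t) c_u (1 - central_mass u t)], where
   [c_u = alpha^(2u) / (2u)!] are the Taylor coefficients of [cosh alpha]. Hence
   [24^t g_e1 t = cosh alpha - S1_defect t], where the defect is the tail of the cosh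
   series plus [sum_u c_u central_mass u t]; it is nonnegative, and for [k >= 1] it lies
   between [c_1 central_mass 1 k] and [O(1/k) + O(central_mass 1 k)], where
   [central_mass 1 k = C(2k+1, k+1) / 4^k] behaves like [1 / sqrt(pi k)] by an explicit
   recursion. The series is its first term [(cosh alpha - S1_defect k) / (24 n)^k] plus a
   tail dominated by a geometric series of ratio at most [1/24], which accounts for the
   factor [24/23] in [U1]. *)

(** * Binomial coefficients *)

Fixpoint binom (n k : nat) : nat :=
  match n, k with
  | _, O => 1
  | O, S _ => 0
  | S n', S k' => binom n' k' + binom n' (S k')
  end%nat.

Lemma binom_0_r n : binom n 0 = 1%nat.
Proof. now destruct n. Qed.

Lemma binom_succ_succ n k : binom (S n) (S k) = (binom n k + binom n (S k))%nat.
Proof. reflexivity. Qed.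

Lemma binom_gt n k : (n < k)%nat -> binom n k = 0%nat.
Proof.
  revert k; induction n as [|n IH]; intros [|k] Hk; try lia; [reflexivity|].
  rewrite binom_succ_succ, !IH; lia.
Qed.

Lemma binom_1_r n : binom n 1 = n.
Proof. induction n as [|n IH]; [reflexivity|]. rewrite binom_succ_succ, binom_0_r, IH. lia. Qed.

Lemma binom_diag n : binom n n = 1%nat.
Proof. induction n as [|n IH]; [reflexivity|]. rewrite binom_succ_succ, IH, binom_gt; lia. Qed.

Lemma binom_absorb n k : (S k * binom n (S k) = (n - k) * binom n k)%nat.
Proof.
  revert k; induction n as [|n IH]; intros [|k]; simpl binom; try lia.
  - rewrite binom_1_r, binom_0_r. lia.
  - pose proof (IH k). pose proof (IH (S k)).
    destruct (Compare_dec.le_lt_dec n k).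
    + rewrite (binom_gt n (S k)), (binom_gt n (S (S k))) by lia. lia.
    + replace (n - S k)%nat with (n - k - 1)%nat in * by lia. nia.
Qed.

Lemma binom_fact n k : (k <= n)%nat ->
  (binom n k * (fact k * fact (n - k)) = fact n)%nat.
Proof.
  induction k as [|k IH]; intros Hk.
  - rewrite binom_0_r, Nat.sub_0_r. simpl. lia.
  - pose proof (binom_absorb n k) as Habs. specialize (IH ltac:(lia)).
    replace (n - k)%nat with (S (n - S k)) in IH, Habs by lia.
    rewrite <- IH.
    change (fact (S k)) with (S k * fact k)%nat.
    change (fact (S (n - S k))) with (S (n - S k) * fact (n - S k))%nat.
    transitivity (S k * binom n (S k) * fact k * fact (n - S k))%nat; [ring|].
    rewrite Habs. ring.
Qed.

Definition rbinom (n k : nat) : R := INR (binom n k).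

Lemma rbinom_nonneg n k : 0 <= rbinom n k.
Proof. apply pos_INR. Qed.

Lemma rbinom_pascal n k : rbinom (S n) (S k) = rbinom n k + rbinom n (S k).
Proof. unfold rbinom. rewrite binom_succ_succ, plus_INR. reflexivity. Qed.

Lemma rbinom_gt n k : (n < k)%nat -> rbinom n k = 0.
Proof. intros H. unfold rbinom. rewrite binom_gt by exact H. reflexivity. Qed.

Lemma rbinom_diag n : rbinom n n = 1.
Proof. unfold rbinom. rewrite binom_diag. reflexivity. Qed.

Lemma rbinom_absorb n k : (k <= n)%nat ->
  (INR k + 1) * rbinom n (S k) = (INR n - INR k) * rbinom n k.
Proof.
  intros H. unfold rbinom. rewrite <- minus_INR, <- S_INR, <- !mult_INR by exact H.
  f_equal. apply binom_absorb.
Qed.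

Lemma INR_fact_pos n : 0 < INR (fact n).
Proof. apply lt_0_INR, lt_O_fact. Qed.

Lemma rbinom_fact n k : (k <= n)%nat ->
  rbinom n k = INR (fact n) / (INR (fact k) * INR (fact (n - k))).
Proof.
  intros H. unfold rbinom. rewrite <- (binom_fact n k H), !mult_INR.
  pose proof (INR_fact_pos k). pose proof (INR_fact_pos (n - k)). field. lra.
Qed.

Lemma rbinom_odd_decr k j : (k <= j)%nat -> rbinom (2 * k + 1) (S j) <= rbinom (2 * k + 1) j.
Proof.
  intros H. destruct (Compare_dec.le_lt_dec j (2 * k + 1)) as [Hj|Hj].
  - pose proof (rbinom_absorb _ _ Hj) as E. rewrite plus_INR, mult_INR in E. simpl INR in E.
    apply le_INR in H. pose proof (rbinom_nonneg (2 * k + 1) j).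
    pose proof (rbinom_nonneg (2 * k + 1) (S j)). pose proof (pos_INR k). nra.
  - rewrite rbinom_gt by lia. apply rbinom_nonneg.
Qed.

Lemma sum1_succ f n : sum1 f (S n) = sum1 f n + f (S n).
Proof. reflexivity. Qed.

Lemma sum1_one f : sum1 f 1 = f 1%nat.
Proof. simpl. ring. Qed.

Lemma sum1_ext f g n : (forall i, (1 <= i <= n)%nat -> f i = g i) -> sum1 f n = sum1 g n.
Proof.
  induction n as [|n IH]; intros H; [reflexivity|].
  rewrite !sum1_succ, (H (S n)), IH by (intros; try apply H; lia). reflexivity.
Qed.

Lemma sum1_add f g n : sum1 (fun i => f i + g i) n = sum1 f n + sum1 g n.
Proof. induction n as [|n IH]; simpl; [lra|]. rewrite IH. lra. Qed.

Lemma sum1_sub f g n : sum1 (fun i => f i - g i) n = sum1 f n - sum1 g n.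
Proof. induction n as [|n IH]; simpl; [lra|]. rewrite IH. lra. Qed.

Lemma sum1_scal c f n : sum1 (fun i => c * f i) n = c * sum1 f n.
Proof. induction n as [|n IH]; simpl; [lra|]. rewrite IH. lra. Qed.

Lemma sum1_const c n : sum1 (fun _ => c) n = INR n * c.
Proof. induction n as [|n IH]; [simpl; lra|]. rewrite sum1_succ, IH, S_INR. lra. Qed.

Lemma sum1_le f g n : (forall i, (1 <= i <= n)%nat -> f i <= g i) -> sum1 f n <= sum1 g n.
Proof.
  induction n as [|n IH]; intros H; simpl; [lra|].
  pose proof (H (S n) ltac:(lia)). pose proof (IH (fun i Hi => H i ltac:(lia))). lra.
Qed.

Lemma sum1_nonneg f n : (forall i, (1 <= i <= n)%nat -> 0 <= f i) -> 0 <= sum1 f n.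
Proof.
  intros H. replace 0 with (sum1 (fun _ => 0) n) by (rewrite sum1_const; ring).
  now apply sum1_le.
Qed.

Lemma sum1_le_mono f m n : (m <= n)%nat -> (forall i, 0 <= f i) -> sum1 f m <= sum1 f n.
Proof.
  intros Hmn Hf. induction Hmn as [|n _ IH]; [lra|]. rewrite sum1_succ. pose proof (Hf (S n)). lra.
Qed.

(** * Normalised central binomial sums *)

Definition central_mass (u t : nat) : R :=
  sum1 (fun m => rbinom (2 * t + 1) (t + m)) u / 4 ^ t.

Lemma pow4_pos t : 0 < 4 ^ t.
Proof. apply pow_lt; lra. Qed.

Lemma central_sum_step t u : (u <= t + 1)%nat ->
  (INR t + 1) * (4 * sum1 (fun m => rbinom (2 * t + 1) (t + m)) u
                 - sum1 (fun m => rbinom (2 * t + 3) (t + 1 + m)) u)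
  = INR u * rbinom (2 * t + 2) (t + 1 + u).
Proof.
  induction u as [|u IH]; intros Hu; [simpl; lra|].
  rewrite !sum1_succ. specialize (IH ltac:(lia)).
  set (X := sum1 (fun m => rbinom (2 * t + 1) (t + m)) u) in *.
  set (Y := sum1 (fun m => rbinom (2 * t + 3) (t + 1 + m)) u) in *.
  set (n := (2 * t + 1)%nat) in *. set (j := (t + u)%nat).
  replace (2 * t + 3)%nat with (S (S n)) by lia.
  replace (2 * t + 2)%nat with (S n) in * by lia.
  replace (t + 1 + S u)%nat with (S (S j)) by lia.
  replace (t + 1 + u)%nat with (S j) in IH by lia.
  replace (t + S u)%nat with (S j) by lia.
  rewrite !rbinom_pascal in *.
  pose proof (rbinom_absorb n j ltac:(lia)) as A0.
  pose proof (rbinom_absorb n (S j) ltac:(lia)) as A1.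
  assert (In : INR n = 2 * INR t + 1) by (unfold n; rewrite plus_INR, mult_INR; simpl; ring).
  assert (Ij : INR j = INR t + INR u) by apply plus_INR.
  rewrite S_INR, In, Ij in *. lra.
Qed.

Lemma central_mass_diff t u : (u <= S t)%nat ->
  central_mass u t - central_mass u (S t)
  = INR u * rbinom (2 * S t) (S t + u) / (INR (S t) * 4 ^ S t).
Proof.
  intros Hu. pose proof (central_sum_step t u ltac:(lia)) as W. unfold central_mass.
  rewrite (sum1_ext (fun m => rbinom (2 * S t + 1) (S t + m))
                    (fun m => rbinom (2 * t + 3) (t + 1 + m)))
    by (intros; f_equal; lia).
  replace (2 * S t)%nat with (2 * t + 2)%nat by lia.
  replace (S t + u)%nat with (t + 1 + u)%nat by lia.
  rewrite <- W, S_INR. simpl pow.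
  pose proof (pow4_pos t). pose proof (pos_INR t). field. lra.
Qed.

(* The upper half of row [2t+1] of Pascal's triangle sums to [2^(2t+1) / 2]. *)
Lemma central_mass_diag t : central_mass (S t) t = 1.
Proof.
  induction t as [|t IH].
  - unfold central_mass, rbinom. simpl. lra.
  - pose proof (central_mass_diff t (S t) ltac:(lia)) as D.
    rewrite IH in D.
    replace (S t + S t)%nat with (2 * S t)%nat in D by lia. rewrite rbinom_diag in D.
    assert (E : central_mass (S (S t)) (S t)
                = central_mass (S t) (S t) + rbinom (2 * S t + 1) (S t + S (S t)) / 4 ^ S t).
    { unfold central_mass. rewrite sum1_succ. field. apply Rgt_not_eq, pow4_pos. }
    replace (S t + S (S t))%nat with (2 * S t + 1)%nat in E by lia.
    rewrite E, rbinom_diag.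
    assert (INR (S t) <> 0) by (apply not_0_INR; lia).
    pose proof (pow4_pos (S t)).
    replace (INR (S t) * 1 / (INR (S t) * 4 ^ S t)) with (1 / 4 ^ S t) in D by (field; lra).
    lra.
Qed.

Lemma central_mass_nonneg u t : 0 <= central_mass u t.
Proof.
  unfold central_mass. apply Rmult_le_pos; [|apply Rlt_le, Rinv_0_lt_compat, pow4_pos].
  apply sum1_nonneg. intros; apply rbinom_nonneg.
Qed.

Lemma central_mass_le_1 u t : (u <= S t)%nat -> central_mass u t <= 1.
Proof.
  intros Hu. rewrite <- (central_mass_diag t). unfold central_mass.
  apply Rmult_le_compat_r; [apply Rlt_le, Rinv_0_lt_compat, pow4_pos|].
  apply sum1_le_mono; [exact Hu|intros; apply rbinom_nonneg].
Qed.

Lemma central_mass_le_mul u k : central_mass u k <= INR u * central_mass 1 k.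
Proof.
  unfold central_mass. rewrite sum1_one, Rmult_div_assoc, <- sum1_const.
  apply Rmult_le_compat_r; [apply Rlt_le, Rinv_0_lt_compat, pow4_pos|].
  apply sum1_le. intros m [Hm _]. induction Hm as [|m Hm IH]; [lra|].
  replace (k + S m)%nat with (S (k + m)) by lia.
  pose proof (rbinom_odd_decr k (k + m) ltac:(lia)). lra.
Qed.

Lemma central_mass_1_succ k :
  central_mass 1 (S k) = central_mass 1 k * (2 * INR k + 3) / (2 * INR k + 4).
Proof.
  unfold central_mass. rewrite !sum1_one, !rbinom_fact by lia.
  replace (2 * S k + 1 - (S k + 1))%nat with (S k) by lia.
  replace (2 * k + 1 - (k + 1))%nat with k by lia.
  replace (2 * S k + 1)%nat with (S (S (2 * k + 1))) by lia.
  replace (S k + 1)%nat with (S (S k)) by lia. replace (k + 1)%nat with (S k) by lia.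
  rewrite !fact_simpl, !mult_INR, !S_INR, !plus_INR, !mult_INR. simpl INR.
  pose proof (INR_fact_pos k). pose proof (INR_fact_pos (2 * k + 1)).
  pose proof (pos_INR k). pose proof (pow4_pos k).
  simpl pow. field. repeat split; lra.
Qed.

Lemma central_mass_1_0 : central_mass 1 0 = 1.
Proof. unfold central_mass, rbinom. simpl. field. Qed.

(* Both bounds are invariants of the recursion [central_mass_1_succ]. *)
Lemma central_mass_1_sq_lower k : 5 / 4 <= central_mass 1 k ^ 2 * (INR k + 5 / 4).
Proof.
  induction k as [|k IH]; [rewrite central_mass_1_0; simpl; lra|].
  rewrite central_mass_1_succ, S_INR. pose proof (pos_INR k).
  set (v := central_mass 1 k) in *. set (x := INR k) in *.
  assert (E : (v * (2 * x + 3) / (2 * x + 4)) ^ 2 * (x + 1 + 5 / 4)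
              = v ^ 2 * ((2 * x + 3) ^ 2 * (x + 1 + 5 / 4) / (2 * x + 4) ^ 2)) by (field; lra).
  assert (F : x + 5 / 4 <= (2 * x + 3) ^ 2 * (x + 1 + 5 / 4) / (2 * x + 4) ^ 2).
  { apply Rmult_le_reg_r with ((2 * x + 4) ^ 2); [nra|].
    unfold Rdiv. rewrite Rmult_assoc, Rinv_l by nra. nra. }
  rewrite E. nra.
Qed.

Lemma central_mass_1_sq_upper k : central_mass 1 k ^ 2 * (INR k + 3 / 2) <= 3 / 2.
Proof.
  induction k as [|k IH]; [rewrite central_mass_1_0; simpl; lra|].
  rewrite central_mass_1_succ, S_INR. pose proof (pos_INR k).
  set (v := central_mass 1 k) in *. set (x := INR k) in *.
  assert (E : (v * (2 * x + 3) / (2 * x + 4)) ^ 2 * (x + 1 + 3 / 2)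
              = v ^ 2 * ((2 * x + 3) ^ 2 * (x + 1 + 3 / 2) / (2 * x + 4) ^ 2)) by (field; lra).
  assert (F : (2 * x + 3) ^ 2 * (x + 1 + 3 / 2) / (2 * x + 4) ^ 2 <= x + 3 / 2).
  { apply Rmult_le_reg_r with ((2 * x + 4) ^ 2); [nra|].
    unfold Rdiv. rewrite Rmult_assoc, Rinv_l by nra. nra. }
  rewrite E. nra.
Qed.

(** * Closed form of [S1] *)

Definition cosh_coef (x : R) (u : nat) : R := x ^ u / INR (fact (2 * u)).

Lemma rising_succ_l a m : rising a (S m) = a * rising (a + 1) m.
Proof.
  revert a; induction m as [|m IH]; intros a; [simpl; ring|].
  change (rising a (S (S m))) with (rising a (S m) * (a + INR (S m))).
  rewrite IH, S_INR. simpl. ring.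
Qed.

Lemma rising_half_sub s :
  (-1) ^ s * rising (1 / 2 - INR s) (s + 1) = INR (fact (2 * s)) / (2 * 4 ^ s * INR (fact s)).
Proof.
  induction s as [|s IH]; [simpl; field|].
  replace (S s + 1)%nat with (S (s + 1)) by lia.
  rewrite rising_succ_l.
  replace (1 / 2 - INR (S s) + 1) with (1 / 2 - INR s) by (rewrite S_INR; ring).
  transitivity ((INR s + 1 / 2) * ((-1) ^ s * rising (1 / 2 - INR s) (s + 1))).
  { rewrite S_INR. change ((-1) ^ S s) with (-1 * (-1) ^ s). field. }
  rewrite IH. replace (2 * S s)%nat with (S (S (2 * s))) by lia.
  rewrite !fact_simpl, !mult_INR, !S_INR, mult_INR. simpl INR.
  pose proof (INR_fact_pos s). pose proof (INR_fact_pos (2 * s)). pose proof (pow4_pos s).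
  pose proof (pos_INR s). simpl pow. field. lra.
Qed.

Lemma rising_neg_nat s u : (u <= s)%nat ->
  (-1) ^ u * rising (- INR s) u = INR (fact s) / INR (fact (s - u)).
Proof.
  induction u as [|u IH]; intros Hu.
  - simpl. rewrite Nat.sub_0_r. field. apply Rgt_not_eq, INR_fact_pos.
  - transitivity ((INR s - INR u) * ((-1) ^ u * rising (- INR s) u)); [simpl; ring|].
    rewrite IH by lia.
    replace (s - u)%nat with (S (s - S u)) by lia.
    rewrite fact_simpl, mult_INR, S_INR, minus_INR, S_INR by lia.
    pose proof (INR_fact_pos (s - S u)). apply le_INR in Hu. rewrite S_INR in Hu.
    field. lra.
Qed.

Lemma S1_summand_eq s u : (1 <= u <= s)%nat ->
  (-1) ^ s * rising (1 / 2 - INR s) (s + 1) / INR s *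
  ((-1) ^ u * rising (- INR s) u / (INR (fact (s + u)) * INR (fact (2 * u - 1)))
   * (PI ^ 2 / 36) ^ u)
  = (central_mass u (pred s) - central_mass u s) * cosh_coef (alpha ^ 2) u.
Proof.
  intros Hsu. destruct s as [|t]; [lia|]. simpl pred.
  rewrite central_mass_diff by lia.
  set (s := S t) in *.
  transitivity (((-1) ^ s * rising (1 / 2 - INR s) (s + 1)) / INR s *
    (((-1) ^ u * rising (- INR s) u) / (INR (fact (s + u)) * INR (fact (2 * u - 1)))
     * (PI ^ 2 / 36) ^ u)); [ring|].
  rewrite rising_half_sub, rising_neg_nat, (rbinom_fact (2 * s) (s + u)) by lia.
  replace (2 * s - (s + u))%nat with (s - u)%nat by lia.
  unfold cosh_coef, alpha.
  replace (2 * u)%nat with (S (2 * u - 1)) at 2 by lia.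
  rewrite fact_simpl, mult_INR.
  replace (INR (S (2 * u - 1))) with (2 * INR u)
    by (rewrite S_INR, minus_INR, mult_INR by lia; simpl; ring).
  pose proof (INR_fact_pos s). pose proof (INR_fact_pos (s - u)).
  pose proof (INR_fact_pos (s + u)). pose proof (INR_fact_pos (2 * u - 1)).
  pose proof (pow4_pos s).
  assert (0 < INR s) by (apply lt_0_INR; unfold s; lia).
  assert (0 < INR u) by (apply lt_0_INR; lia).
  replace ((PI / 6) ^ 2) with (PI ^ 2 / 36) by field.
  field. repeat split; lra.
Qed.

Lemma S1_succ t : S1 (S t) = S1 t +
  sum1 (fun u => (central_mass u t - central_mass u (S t)) * cosh_coef (alpha ^ 2) u) (S t).
Proof.
  unfold S1. rewrite sum1_succ. f_equal.
  rewrite <- sum1_scal. apply sum1_ext. intros u Hu. apply S1_summand_eq. lia.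
Qed.

(* Exchanging the two summations in [S1] telescopes the inner differences. *)
Lemma S1_weighted t :
  S1 t = sum1 (fun u => cosh_coef (alpha ^ 2) u * (1 - central_mass u t)) t.
Proof.
  induction t as [|t IH]; [reflexivity|].
  rewrite S1_succ, IH, !sum1_succ, central_mass_diag.
  assert (sum1 (fun u => cosh_coef (alpha ^ 2) u * (1 - central_mass u (S t))) t
          = sum1 (fun u => cosh_coef (alpha ^ 2) u * (1 - central_mass u t)) t
            + sum1 (fun u => (central_mass u t - central_mass u (S t))
                             * cosh_coef (alpha ^ 2) u) t)
    by (rewrite <- sum1_add; apply sum1_ext; intros; ring).
  lra.
Qed.

(** * The series of [cosh] *)

Definition cosh_term (a : R) (n : nat) : R := (a ^ n + (- a) ^ n) / (2 * INR (fact n)).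

Lemma exp_is_series y : is_series (fun n => y ^ n / INR (fact n)) (exp y).
Proof.
  eapply is_series_ext; [|exact (is_exp_Reals y)].
  intros n. simpl. rewrite pow_n_pow. reflexivity.
Qed.

Lemma cosh_is_series a : is_series (cosh_term a) (cosh a).
Proof.
  pose proof (is_series_scal (/ 2) _ _
                (is_series_plus _ _ _ _ (exp_is_series a) (exp_is_series (- a)))) as H.
  replace (cosh a) with (scal (/ 2) (plus (exp a) (exp (- a))))
    by (unfold cosh, scal, plus; simpl; unfold mult; simpl; field).
  eapply is_series_ext; [|exact H].
  intros n. unfold cosh_term, scal, plus; simpl; unfold mult, plus; simpl.
  pose proof (INR_fact_pos n). field. lra.
Qed.

Lemma cosh_coef_nonneg x u : 0 <= x -> 0 <= cosh_coef x u.
Proof.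
  intros Hx. unfold cosh_coef. pose proof (INR_fact_pos (2 * u)).
  apply Rmult_le_pos; [now apply pow_le|apply Rlt_le, Rinv_0_lt_compat; lra].
Qed.

Lemma cosh_term_even a m : cosh_term a (2 * m) = cosh_coef (a ^ 2) m.
Proof.
  unfold cosh_term, cosh_coef. rewrite !pow_mult. replace ((- a) ^ 2) with (a ^ 2) by ring.
  pose proof (INR_fact_pos (2 * m)). field. lra.
Qed.

Lemma cosh_term_odd a m : cosh_term a (S (2 * m)) = 0.
Proof.
  unfold cosh_term. replace (- a) with (-1 * a) by ring.
  rewrite Rpow_mult_distr, pow_1_odd. unfold Rdiv. ring.
Qed.

Lemma cosh_term_nonneg a n : 0 <= cosh_term a n.
Proof.
  destruct (Nat.Even_or_Odd n) as [[m ->]|[m ->]].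
  - rewrite cosh_term_even. apply cosh_coef_nonneg, pow2_ge_0.
  - rewrite Nat.add_1_r, cosh_term_odd. lra.
Qed.

Lemma sum_n_cosh_term a N :
  sum_n (cosh_term a) (S (2 * N)) = 1 + sum1 (cosh_coef (a ^ 2)) N.
Proof.
  induction N as [|N IH].
  - rewrite sum_Sn, sum_O. unfold plus; simpl. unfold cosh_term. simpl. field.
  - replace (S (2 * S N)) with (S (S (S (2 * N)))) by lia.
    rewrite 2!sum_Sn, IH, sum1_succ.
    replace (S (S (2 * N))) with (2 * S N)%nat by lia.
    rewrite cosh_term_even, cosh_term_odd. unfold plus; simpl. ring.
Qed.

Lemma sum_n_cosh_term_mono a M M' : (M <= M')%nat ->
  sum_n (cosh_term a) M <= sum_n (cosh_term a) M'.
Proof.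
  induction 1; [lra|]. rewrite sum_Sn. unfold plus; simpl.
  pose proof (cosh_term_nonneg a (S m)). lra.
Qed.

Lemma cosh_ge_partial a N : 1 + sum1 (cosh_coef (a ^ 2)) N <= cosh a.
Proof.
  rewrite <- sum_n_cosh_term.
  apply (is_lim_seq_incr_compare (sum_n (cosh_term a))); [exact (cosh_is_series a)|].
  intros n. apply sum_n_cosh_term_mono. lia.
Qed.

Lemma cosh_coef_succ x u :
  cosh_coef x (S u) = cosh_coef x u * x / ((2 * INR u + 1) * (2 * INR u + 2)).
Proof.
  unfold cosh_coef. replace (2 * S u)%nat with (S (S (2 * u))) by lia.
  rewrite !fact_simpl, !mult_INR, !S_INR.
  pose proof (INR_fact_pos (2 * u)). set (F := INR (fact (2 * u))) in *.
  rewrite mult_INR. simpl INR. pose proof (pos_INR u). simpl pow.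
  field. repeat split; lra.
Qed.

Lemma cosh_coef_half x u : 0 <= x <= 1 -> 2 * cosh_coef x (S u) <= cosh_coef x u.
Proof.
  intros Hx. rewrite cosh_coef_succ. pose proof (cosh_coef_nonneg x u (proj1 Hx)).
  pose proof (pos_INR u). set (d := (2 * INR u + 1) * (2 * INR u + 2)).
  assert (Hd : 2 <= d) by (unfold d; nra).
  apply Rmult_le_reg_r with d; [lra|].
  unfold Rdiv. rewrite Rmult_assoc, Rmult_assoc, Rinv_l by lra. nra.
Qed.

(* The even terms of the cosh series at least halve, so the tail is at most twice its first term. *)
Lemma cosh_le_partial a N : a ^ 2 <= 1 ->
  cosh a <= 1 + sum1 (cosh_coef (a ^ 2)) N + 2 * cosh_coef (a ^ 2) (S N).
Proof.
  intros Ha. set (c := cosh_coef (a ^ 2)).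
  assert (Hx : 0 <= a ^ 2 <= 1) by (split; [apply pow2_ge_0|exact Ha]).
  assert (Htail : forall j, sum1 c (N + j) + 2 * c (S (N + j)) <= sum1 c N + 2 * c (S N)).
  { induction j as [|j IH]; [rewrite Nat.add_0_r; lra|].
    replace (N + S j)%nat with (S (N + j)) by lia. rewrite sum1_succ.
    pose proof (cosh_coef_half _ (S (N + j)) Hx). unfold c in *. lra. }
  apply (is_lim_seq_le (sum_n (cosh_term a)) (fun _ => 1 + sum1 c N + 2 * c (S N))
           (cosh a) (1 + sum1 c N + 2 * c (S N)));
    [|exact (cosh_is_series a)|apply is_lim_seq_const].
  intros M. apply Rle_trans with (sum_n (cosh_term a) (S (2 * (N + M)))).
  - apply sum_n_cosh_term_mono. lia.
  - rewrite sum_n_cosh_term. pose proof (Htail M).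
    pose proof (cosh_coef_nonneg _ (S (N + M)) (proj1 Hx)). unfold c in *. lra.
Qed.

Lemma cosh_coef_mul_le x u : 0 <= x -> (1 <= u)%nat -> INR u * cosh_coef x u <= x ^ u / 2.
Proof.
  intros Hx Hu. unfold cosh_coef.
  replace (2 * u)%nat with (S (2 * u - 1)) by lia. rewrite fact_simpl, mult_INR.
  replace (INR (S (2 * u - 1))) with (2 * INR u)
    by (rewrite S_INR, minus_INR, mult_INR by lia; simpl; ring).
  assert (0 < INR u) by (apply lt_0_INR; lia).
  assert (1 <= INR (fact (2 * u - 1))) by (apply (le_INR 1), lt_O_fact).
  pose proof (pow_le x u Hx).
  replace (INR u * (x ^ u / (2 * INR u * INR (fact (2 * u - 1)))))
    with (x ^ u / 2 / INR (fact (2 * u - 1))) by (field; lra).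
  apply Rmult_le_reg_r with (INR (fact (2 * u - 1))); [lra|].
  unfold Rdiv at 1. rewrite Rmult_assoc, Rinv_l by lra. nra.
Qed.

Lemma fact_double_ge k : (1 <= k)%nat -> 12 * (INR k + 1) <= INR (fact (2 * k + 2)).
Proof.
  intros Hk. destruct k as [|m]; [lia|].
  replace (2 * S m + 2)%nat with (S (S (S (2 * m + 1)))) by lia.
  rewrite !fact_simpl, !mult_INR.
  assert (HF : 1 <= INR (fact (2 * m + 1))) by (apply (le_INR 1), lt_O_fact).
  set (F := INR (fact (2 * m + 1))) in *.
  rewrite !S_INR, plus_INR, mult_INR. simpl INR. pose proof (pos_INR m).
  assert (6 <= (2 * INR m + 3) * (2 * INR m + 2) * F) by nra.
  nra.
Qed.

Lemma cosh_coef_succ_le x k : 0 <= x <= 1 -> (1 <= k)%nat ->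
  cosh_coef x (S k) <= x ^ 2 / (12 * (INR k + 1)).
Proof.
  intros Hx Hk. unfold cosh_coef. pose proof (fact_double_ge k Hk). pose proof (pos_INR k).
  replace (2 * S k)%nat with (2 * k + 2)%nat by lia.
  assert (Hpow : x ^ S k <= x ^ 2).
  { replace (S k) with (2 + (k - 1))%nat by lia. rewrite pow_add.
    pose proof (pow_le x (k - 1) (proj1 Hx)). pose proof (pow_le x 2 (proj1 Hx)).
    assert (x ^ (k - 1) <= 1) by (rewrite <- (pow1 (k - 1)); apply pow_incr; lra). nra. }
  apply Rle_trans with (x ^ 2 / INR (fact (2 * k + 2))).
  - apply Rmult_le_compat_r; [apply Rlt_le, Rinv_0_lt_compat, INR_fact_pos|exact Hpow].
  - apply Rmult_le_compat_l; [apply pow2_ge_0|]. apply Rinv_le_contravar; lra.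
Qed.

Lemma sum1_pow_le x k : 0 <= x < 1 -> sum1 (fun u => x ^ u) k <= x / (1 - x).
Proof.
  intros Hx.
  assert (E : sum1 (fun u => x ^ u) k = x * (1 - x ^ k) / (1 - x)).
  { induction k as [|k IH]; [simpl; field; lra|]. rewrite sum1_succ, IH. simpl. field. lra. }
  rewrite E. pose proof (pow_le x k (proj1 Hx)).
  apply Rmult_le_compat_r; [apply Rlt_le, Rinv_0_lt_compat; lra|]. nra.
Qed.

(** * Bounds on the defect [cosh alpha - 1 - S1 t] *)

Definition S1_defect (t : nat) : R := cosh alpha - 1 - S1 t.

Lemma alpha_sq_bounds : 0 < alpha ^ 2 <= 4 / 9.
Proof. unfold alpha. pose proof PI_RGT_0. pose proof PI_4. split; nra. Qed.

Lemma S1_nonneg t : 0 <= S1 t.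
Proof.
  rewrite S1_weighted. apply sum1_nonneg. intros u Hu.
  pose proof (central_mass_le_1 u t ltac:(lia)). pose proof alpha_sq_bounds.
  apply Rmult_le_pos; [apply cosh_coef_nonneg; lra|lra].
Qed.

Lemma S1_defect_eq t : S1_defect t =
  (cosh alpha - 1 - sum1 (cosh_coef (alpha ^ 2)) t)
  + sum1 (fun u => cosh_coef (alpha ^ 2) u * central_mass u t) t.
Proof.
  unfold S1_defect. rewrite S1_weighted.
  rewrite (sum1_ext _ (fun u => cosh_coef (alpha ^ 2) u - cosh_coef (alpha ^ 2) u * central_mass u t))
    by (intros; ring).
  rewrite sum1_sub. ring.
Qed.

Lemma S1_defect_nonneg t : 0 <= S1_defect t.
Proof.
  rewrite S1_defect_eq. pose proof (cosh_ge_partial alpha t). pose proof alpha_sq_bounds.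
  assert (0 <= sum1 (fun u => cosh_coef (alpha ^ 2) u * central_mass u t) t).
  { apply sum1_nonneg. intros u _.
    apply Rmult_le_pos; [apply cosh_coef_nonneg; lra|apply central_mass_nonneg]. }
  lra.
Qed.

Lemma S1_defect_ge k : (1 <= k)%nat -> alpha ^ 2 / 2 * central_mass 1 k <= S1_defect k.
Proof.
  intros Hk. rewrite S1_defect_eq. pose proof (cosh_ge_partial alpha k).
  pose proof alpha_sq_bounds.
  assert (sum1 (fun u => cosh_coef (alpha ^ 2) u * central_mass u k) 1
          <= sum1 (fun u => cosh_coef (alpha ^ 2) u * central_mass u k) k).
  { apply sum1_le_mono; [exact Hk|]. intros u.
    apply Rmult_le_pos; [apply cosh_coef_nonneg; lra|apply central_mass_nonneg]. }
  rewrite sum1_one in H1. replace (cosh_coef (alpha ^ 2) 1) with (alpha ^ 2 / 2) in H1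
    by (unfold cosh_coef; simpl; field).
  lra.
Qed.

Lemma S1_defect_le k : (1 <= k)%nat ->
  S1_defect k <= (alpha ^ 2) ^ 2 / (6 * (INR k + 1))
                 + central_mass 1 k * (alpha ^ 2 / (2 * (1 - alpha ^ 2))).
Proof.
  intros Hk. rewrite S1_defect_eq. pose proof alpha_sq_bounds as Hx.
  pose proof (cosh_le_partial alpha k ltac:(lra)).
  set (x := alpha ^ 2) in *. set (v := central_mass 1 k).
  pose proof (cosh_coef_succ_le x k ltac:(lra) Hk). pose proof (pos_INR k).
  replace ((x ^ 2) / (6 * (INR k + 1))) with (2 * (x ^ 2 / (12 * (INR k + 1)))) by (field; lra).
  assert (sum1 (fun u => cosh_coef x u * central_mass u k) k <= v * (x / (2 * (1 - x)))).
  { apply Rle_trans with (sum1 (fun u => v / 2 * x ^ u) k).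
    - apply sum1_le. intros u Hu.
      pose proof (central_mass_le_mul u k) as Hle.
      pose proof (cosh_coef_mul_le x u ltac:(lra) ltac:(lia)).
      pose proof (cosh_coef_nonneg x u ltac:(lra)).
      pose proof (central_mass_nonneg 1 k) as Hv. fold v in Hle, Hv. nra.
    - rewrite sum1_scal. pose proof (sum1_pow_le x k ltac:(lra)) as Hgeom.
      pose proof (central_mass_nonneg 1 k) as Hv. fold v in Hv.
      replace (v * (x / (2 * (1 - x)))) with (v / 2 * (x / (1 - x))) by (field; lra).
      apply Rmult_le_compat_l; [lra|exact Hgeom]. }
  lra.
Qed.

Lemma cosh_sq_sub_sinh_sq a : cosh a ^ 2 - sinh a ^ 2 = 1.
Proof.
  unfold cosh, sinh.
  replace (((exp a + exp (- a)) / 2) ^ 2 - ((exp a - exp (- a)) / 2) ^ 2)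
    with (exp a * exp (- a)) by field.
  rewrite <- exp_plus, Rplus_opp_r, exp_0. reflexivity.
Qed.

Lemma cosh_alpha_bounds :
  1 + alpha ^ 2 / 2 <= cosh alpha <= 1 + alpha ^ 2 / 2 + (alpha ^ 2) ^ 2 / 12.
Proof.
  pose proof (cosh_ge_partial alpha 1). pose proof alpha_sq_bounds.
  pose proof (cosh_le_partial alpha 1 ltac:(lra)).
  rewrite sum1_one in *. unfold cosh_coef in *. simpl in *. split; lra.
Qed.

Lemma alpha_sinh_bounds : alpha ^ 2 <= alpha * sinh alpha <= 1097 / 1000 * alpha ^ 2.
Proof.
  assert (Hpos : 0 < alpha * sinh alpha).
  { assert (0 < alpha) by (unfold alpha; pose proof PI_RGT_0; lra).
    assert (0 < sinh alpha) by (rewrite <- sinh_0; now apply sinh_lt). nra. }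
  assert (Hsq : (alpha * sinh alpha) ^ 2 = alpha ^ 2 * (cosh alpha ^ 2 - 1))
    by (pose proof (cosh_sq_sub_sinh_sq alpha); nra).
  pose proof cosh_alpha_bounds. pose proof alpha_sq_bounds.
  set (A := alpha * sinh alpha) in *. set (x := alpha ^ 2) in *. set (ch := cosh alpha) in *.
  split.
  - assert (x + x ^ 2 / 4 <= ch ^ 2 - 1) by nra. nra.
  - set (h := x / 2 + x ^ 2 / 12).
    assert (ch ^ 2 - 1 <= 2 * h + h ^ 2) by (unfold h in *; nra).
    assert (2 * h + h ^ 2 <= 12034 / 10000 * x).
    { unfold h. assert (x ^ 2 <= 4 / 9 * x) by nra. assert (x ^ 3 <= (4 / 9) ^ 2 * x) by nra.
      assert (x ^ 4 <= (4 / 9) ^ 3 * x) by nra. nra. }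
    nra.
Qed.

Lemma sqrt_ge_of_sq y r : 0 <= r -> r * r <= y -> r <= sqrt y.
Proof. intros Hr Hy. rewrite <- (sqrt_square r) by exact Hr. apply sqrt_le_1_alt. exact Hy. Qed.

Lemma S1_defect_sqrt_lt k : (1 <= k)%nat ->
  S1_defect k * sqrt (INR k + 1) < 6 / 5 * (alpha * sinh alpha).
Proof.
  intros Hk. pose proof (S1_defect_le k Hk) as Hd. pose proof (central_mass_1_sq_upper k) as Hv.
  pose proof (central_mass_nonneg 1 k). pose proof alpha_sq_bounds. pose proof alpha_sinh_bounds.
  assert (Hy : 2 <= INR k + 1) by (apply (le_INR 1) in Hk; simpl in Hk; lra).
  replace (INR k + 3 / 2) with (INR k + 1 + 1 / 2) in Hv by field.
  pose proof (sqrt_sqrt (INR k + 1) ltac:(lra)) as Hrr.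
  assert (Hr : 1414 / 1000 <= sqrt (INR k + 1)) by (apply sqrt_ge_of_sq; lra).
  set (y := INR k + 1) in *. set (r := sqrt y) in *. set (v := central_mass 1 k) in *.
  set (x := alpha ^ 2) in *.
  assert (Hw : v * r <= 123 / 100).
  { assert ((v * r) ^ 2 <= 3 / 2) by (replace ((v * r) ^ 2) with (v ^ 2 * (r * r)) by ring; nra).
    nra. }
  assert (T1 : x ^ 2 / (6 * y) * r <= 6 / 100 * x).
  { replace (x ^ 2 / (6 * y) * r) with (x * (x / (6 * r))) by (rewrite <- Hrr; field; lra).
    rewrite (Rmult_comm (6 / 100)). apply Rmult_le_compat_l; [lra|].
    apply Rmult_le_reg_r with (6 * r); [lra|]. unfold Rdiv. rewrite Rmult_assoc, Rinv_l by lra.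
    lra. }
  assert (T2 : v * (x / (2 * (1 - x))) * r <= 111 / 100 * x).
  { replace (v * (x / (2 * (1 - x))) * r) with ((v * r) * (x / (2 * (1 - x)))) by ring.
    assert (x / (2 * (1 - x)) <= 9 / 10 * x).
    { apply Rmult_le_reg_r with (2 * (1 - x)); [lra|]. unfold Rdiv.
      rewrite Rmult_assoc, Rinv_l by lra. nra. }
    assert (0 <= x / (2 * (1 - x))) by (apply Rmult_le_pos; [lra|apply Rlt_le, Rinv_0_lt_compat; lra]).
    nra. }
  assert (S1_defect k * r <= (x ^ 2 / (6 * y) + v * (x / (2 * (1 - x)))) * r)
    by (apply Rmult_le_compat_r; lra).
  lra.
Qed.

Lemma S1_defect_sqrt_gt k : (1 <= k)%nat ->
  alpha * sinh alpha / 2 - 5 / (4 * (INR k + 1)) < S1_defect k * sqrt (INR k + 1).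
Proof.
  intros Hk. pose proof (S1_defect_ge k Hk) as Hd. pose proof (central_mass_1_sq_lower k) as Hv.
  pose proof (central_mass_nonneg 1 k). pose proof alpha_sq_bounds. pose proof alpha_sinh_bounds.
  assert (Hy : 2 <= INR k + 1) by (apply (le_INR 1) in Hk; simpl in Hk; lra).
  replace (INR k + 5 / 4) with (INR k + 1 + 1 / 4) in Hv by field.
  pose proof (sqrt_sqrt (INR k + 1) ltac:(lra)) as Hrr.
  pose proof (sqrt_lt_R0 (INR k + 1) ltac:(lra)) as Hr.
  assert (Hsmall : (k <= 5)%nat -> INR k + 1 <= 6) by (intros Hb; apply le_INR in Hb; simpl in Hb; lra).
  assert (Hlarge : (6 <= k)%nat -> 7 <= INR k + 1) by (intros Hb; apply le_INR in Hb; simpl in Hb; lra).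
  set (y := INR k + 1) in *. set (r := sqrt y) in *. set (v := central_mass 1 k) in *.
  set (x := alpha ^ 2) in *. set (A := alpha * sinh alpha) in *.
  assert (Hw : (v * r) ^ 2 * (y + 1 / 4) >= 5 / 4 * y)
    by (replace ((v * r) ^ 2) with (v ^ 2 * (r * r)) by ring; rewrite Hrr; nra).
  assert (0 <= v * r) by nra.
  assert (x / 2 * (v * r) <= S1_defect k * r)
    by (replace (x / 2 * (v * r)) with (x / 2 * v * r) by ring; apply Rmult_le_compat_r; lra).
  assert (A < x * (v * r) + 5 / (2 * y)).
  { destruct (Compare_dec.le_lt_dec k 5) as [Hk5|Hk5].
    - specialize (Hsmall Hk5). assert (1 <= v * r) by nra.
      assert (5 / 12 <= 5 / (2 * y)).
      { unfold Rdiv. apply Rmult_le_compat_l; [lra|]. apply Rinv_le_contravar; lra. }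
      nra.
    - specialize (Hlarge Hk5). assert (1097 / 1000 < v * r) by nra.
      assert (0 < 5 / (2 * y)) by (apply Rdiv_lt_0_compat; lra).
      nra. }
  replace (5 / (4 * y)) with (5 / (2 * y) / 2) by (field; lra).
  lra.
Qed.

(** * The tail series *)

Lemma series_geometric_dominated (a : nat -> R) (M q : R) :
  0 <= q < 1 -> (forall j, 0 <= a j <= M * q ^ j) ->
  exists s, is_series a s /\ a 0%nat <= s <= a 0%nat + M * q / (1 - q).
Proof.
  intros Hq Ha.
  assert (Hgeom : forall c, is_series (fun j => c * q ^ j) (c * / (1 - q))).
  { intros c. pose proof (is_series_geom q ltac:(rewrite Rabs_right; lra)) as G.
    apply (is_series_scal_l c) in G. exact G. }
  assert (Hex : ex_series a).
  { apply (ex_series_le a (fun j => M * q ^ j)); [|eexists; apply Hgeom].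
    intros j. unfold norm; simpl; unfold abs; simpl.
    rewrite Rabs_right by (apply Rle_ge, Ha). apply Ha. }
  exists (Series a). split; [now apply Series_correct|].
  rewrite (Series_incr_1 a Hex).
  assert (Hex1 : ex_series (fun j => a (S j))) by exact (proj1 (ex_series_incr_1 a) Hex).
  assert (0 <= Series (fun j => a (S j))).
  { replace 0 with (Series (fun j => 0 * a (S j))) by (rewrite Series_scal_l; ring).
    apply Series_le; [intros j; pose proof (Ha (S j)); lra|exact Hex1]. }
  assert (Series (fun j => a (S j)) <= M * q * / (1 - q)).
  { rewrite <- (is_series_unique _ _ (Hgeom (M * q))).
    apply Series_le; [|eexists; apply Hgeom].
    intros j. split; [apply Ha|]. pose proof (Ha (S j)). simpl pow in *. lra. }
  unfold Rdiv. lra.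
Qed.

Lemma Rpower_3_2 y : 0 < y -> Rpower y (3 / 2) = y * sqrt y.
Proof.
  intros Hy. replace (3 / 2) with (1 + / 2) by field.
  rewrite Rpower_plus, Rpower_1, Rpower_sqrt by exact Hy. reflexivity.
Qed.

Lemma div_pow_div_pow (b N c : R) k : 0 < b -> 0 < N ->
  c / b ^ k / N ^ k = c * (/ (b * N)) ^ k.
Proof.
  intros Hb HN. rewrite pow_inv, Rpow_mult_distr.
  assert (0 < b ^ k) by (apply pow_lt; lra). assert (0 < N ^ k) by (apply pow_lt; lra).
  field. lra.
Qed.

Lemma g_e1_div_pow N m : 0 < N ->
  g_e1 m / N ^ m = (cosh alpha - S1_defect m) * (/ (24 * N)) ^ m.
Proof.
  intros HN. unfold g_e1, S1_defect. rewrite div_pow_div_pow by lra. f_equal. ring.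
Qed.

Lemma L1_div_pow_lt N k : 0 < N -> (1 <= k)%nat ->
  L1 k / N ^ k < (cosh alpha - S1_defect k) * (/ (24 * N)) ^ k.
Proof.
  intros HN Hk. pose proof (S1_defect_sqrt_lt k Hk) as Hd.
  assert (Hy : 0 < INR k + 1) by (pose proof (pos_INR k); lra).
  pose proof (sqrt_lt_R0 _ Hy) as Hr.
  unfold L1. rewrite div_pow_div_pow, Rpower_3_2 by lra.
  apply Rmult_lt_compat_r; [apply pow_lt, Rinv_0_lt_compat; lra|].
  assert (S1_defect k < 6 * alpha * sinh alpha / (5 * sqrt (INR k + 1))).
  { apply Rmult_lt_reg_r with (sqrt (INR k + 1)); [lra|].
    replace (6 * alpha * sinh alpha / (5 * sqrt (INR k + 1)) * sqrt (INR k + 1))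
      with (6 / 5 * (alpha * sinh alpha)) by (field; lra). lra. }
  assert (0 < 3 / (10 * ((INR k + 1) * sqrt (INR k + 1)))) by (apply Rdiv_lt_0_compat; nra).
  lra.
Qed.

Lemma U1_div_pow_gt N k : 0 < N -> (1 <= k)%nat ->
  (24 / 23 * cosh alpha - S1_defect k) * (/ (24 * N)) ^ k < U1 k / N ^ k.
Proof.
  intros HN Hk. pose proof (S1_defect_sqrt_gt k Hk) as Hd.
  assert (Hy : 0 < INR k + 1) by (pose proof (pos_INR k); lra).
  pose proof (sqrt_lt_R0 _ Hy) as Hr.
  unfold U1. rewrite div_pow_div_pow, Rpower_3_2 by lra.
  apply Rmult_lt_compat_r; [apply pow_lt, Rinv_0_lt_compat; lra|].
  assert (alpha * sinh alpha / (2 * sqrt (INR k + 1))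
          - 5 / (4 * ((INR k + 1) * sqrt (INR k + 1))) < S1_defect k).
  { apply Rmult_lt_reg_r with (sqrt (INR k + 1)); [lra|].
    replace ((alpha * sinh alpha / (2 * sqrt (INR k + 1))
              - 5 / (4 * ((INR k + 1) * sqrt (INR k + 1)))) * sqrt (INR k + 1))
      with (alpha * sinh alpha / 2 - 5 / (4 * (INR k + 1))) by (field; lra). lra. }
  lra.
Qed.

Theorem mainTheorem16 (n k : nat) (hn : (1 <= n)%nat) (hk : (1 <= k)%nat) :
  exists s : R,
    is_series (fun j : nat => g_e1 (k + j) / INR n ^ (k + j)) s /\
    L1 k / INR n ^ k < s /\ s < U1 k / INR n ^ k.
Proof.
  assert (HN : 1 <= INR n) by (apply (le_INR 1) in hn; simpl in hn; lra).
  set (q := / (24 * INR n)).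
  assert (Hq : 0 < q <= 1 / 24).
  { split; [apply Rinv_0_lt_compat; lra|]. unfold q. rewrite <- (Rinv_inv 24) at 2.
    unfold Rdiv. rewrite Rmult_1_l. apply Rinv_le_contravar; lra. }
  pose proof cosh_alpha_bounds. pose proof alpha_sq_bounds. pose proof (pow_lt q k (proj1 Hq)).
  destruct (series_geometric_dominated (fun j => g_e1 (k + j) / INR n ^ (k + j))
              (cosh alpha * q ^ k) q) as [s [Hs Hbounds]]; [lra| |].
  { intros j. rewrite g_e1_div_pow, pow_add by lra. fold q.
    pose proof (S1_nonneg (k + j)). pose proof (S1_defect_nonneg (k + j)).
    assert (0 < q ^ k * q ^ j) by (apply Rmult_lt_0_compat, pow_lt; lra).
    unfold S1_defect in *. rewrite Rmult_assoc.
    split; [apply Rmult_le_pos|apply Rmult_le_compat_r]; lra. }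
  exists s. split; [exact Hs|].
  rewrite Nat.add_0_r, g_e1_div_pow in Hbounds by lra. fold q in Hbounds.
  pose proof (L1_div_pow_lt (INR n) k ltac:(lra) hk) as HL.
  pose proof (U1_div_pow_gt (INR n) k ltac:(lra) hk) as HU. fold q in HL, HU.
  assert (Hgeom : q / (1 - q) <= 1 / 23).
  { apply Rmult_le_reg_r with (1 - q); [lra|].
    unfold Rdiv. rewrite Rmult_assoc, Rinv_l by lra. lra. }
  assert (cosh alpha * q ^ k * q / (1 - q) <= cosh alpha * q ^ k * (1 / 23)).
  { unfold Rdiv at 1. rewrite Rmult_assoc. apply Rmult_le_compat_l; [nra|exact Hgeom]. }
  split; lra.
Qed.
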